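(* Let $(X,Y)\sim P_{X,Y}$ be random variables in $\{0,1\}\times\mathcal{Y}$, $\mathcal{Y}=\{1,\dots,|\mathcal{Y}|\}$, let $p_y=\mathbb{P}(X=0|Y=y)$ and assume $p_1\le\cdots\le p_{|\mathcal{Y}|}$. For $i\in\{2,\dots,|\mathcal{Y}|-1\}$ let $\alpha_i\in[0,1]$ satisfy $\alpha_ip_{i-1}+(1-\alpha_i)p_{i+1}=p_i$, and define the joint distribution $P^i_{Y,Z,X}=P_YP^i_{Z|Y}P^i_{X|Z}$ on $\mathcal{Y}\times(\mathcal{Y}\setminus\{i\})\times\{0,1\}$ by $P^i_{Z|Y}(z|y)=1$ if $y\neq i, z=y$; $=\alpha_i$ if $y=i,z=i-1$; $=1-\alpha_i$ if $y=i,z=i+1$; $=0$ otherwise; and $P^i_{X|Z}(0|z)=p_z$. Then under $P^i_{Y,Z,X}$, $X-Z-Y$ form a Markov chain in this order, $P^i_{X,Y}=P_{X,Y}$, and \[ I(X;Z)-I(X;Y)=P_Y(i)\big[h_2(\alpha_ip_{i-1}+(1-\alpha_i)p_{i+1})-\alpha_ih_2(p_{i-1})-(1-\alpha_i)h_2(p_{i+1})\big]. \]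
   Context: $h_2(p)=-p\log p-(1-p)\log(1-p)$ is the binary entropy function; logarithms are natural. *)

From HB Require Import structures.
From mathcomp Require Import all_boot all_order all_algebra.
From mathcomp Require Import all_classical all_reals all_analysis.
Set Implicit Arguments. Unset Strict Implicit. Unset Printing Implicit Defensive.
Import Order.TTheory GRing.Theory Num.Theory.
Local Open Scope ring_scope.

Section Defs.
Variable R : realType.

(* binary entropy, natural log; ln 0 = 0 in mathcomp-analysis, so 0 ln 0 = 0 *)
Definition h2 (q : R) : R := - (q * ln q) - (1 - q) * ln (1 - q).

(* mutual information of a joint pmf f on A x B (nats); terms with
   f a b = 0 vanish because of the factor f a b. *)
Definition mutual_info (A B : finType) (f : A -> B -> R) : R :=
  \sum_(a : A) \sum_(b : B)
     f a b * ln (f a b / ((\sum_(b' : B) f a b') * (\sum_(a' : A) f a' b))).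

(* A - B - C is a Markov chain under the joint pmf Q : A -> B -> C -> R,
   i.e. A and C are conditionally independent given B:
   Q(a,b,c) Q(b) = Q(a,b) Q(b,c). *)
Definition markov_chain (A B C : finType) (Q : A -> B -> C -> R) : Prop :=
  forall a b c,
    Q a b c * (\sum_(a' : A) \sum_(c' : C) Q a' b c')
    = (\sum_(c' : C) Q a b c') * (\sum_(a' : A) Q a' b c).

Definition Zalph (n : nat) (i : 'I_n) := {z : 'I_n | z != i}.

(* P^i_{Z|Y}(z|y); im, ip stand for i-1, i+1 *)
Definition PZgY (n : nat) (i im ip : 'I_n) (alpha : R)
    (y : 'I_n) (z : Zalph i) : R :=
  if y != i then (if val z == y then 1 else 0)
  else if val z == im then alpha
  else if val z == ip then 1 - alpha
  else 0.

(* P^i_{X|Z}(x|z), X in 'I_2 with ord0 standing for X = 0 *)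
Definition PXgZ (n : nat) (i : 'I_n) (p : 'I_n -> R) (x : 'I_2) (z : Zalph i) : R :=
  if x == ord0 then p (val z) else 1 - p (val z).

Definition PiYZX (n : nat) (PY : 'I_n -> R) (i im ip : 'I_n) (alpha : R)
    (p : 'I_n -> R) (y : 'I_n) (z : Zalph i) (x : 'I_2) : R :=
  PY y * PZgY im ip alpha y z * PXgZ p x z.

End Defs.

From HB Require Import structures.
From mathcomp Require Import all_boot all_order all_algebra.
From mathcomp Require Import all_classical all_reals all_analysis.
From mathcomp Require Import ring lra zify.
Import Order.TTheory GRing.Theory Num.Theory.
Set Implicit Arguments. Unset Strict Implicit. Unset Printing Implicit Defensive.
Local Open Scope ring_scope.

(* For a binary X whose conditional law given B is Bernoulli(q b),
   I(X;B) = H(X) - sum_b P(b) h2(q b).  Under P^i the marginal of X is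
   unchanged, and averaging out the split of the atom y = i into i-1 and
   i+1 replaces h2(p_i) by alpha h2(p_(i-1)) + (1-alpha) h2(p_(i+1)) in the
   conditional entropy; the difference of the two mutual informations is
   therefore the Jensen gap of h2 at p_i, weighted by P_Y(i). *)

Section Proposition1.
Variable R : realType.

Lemma sum_ord2 (F : 'I_2 -> R) : \sum_(x : 'I_2) F x = F ord0 + F ord_max.
Proof. by rewrite big_ord_recl big_ord1; congr (_ + F _); apply: val_inj. Qed.

Lemma markov_chain_factor (A B C : finType) (Q : A -> B -> C -> R)
    (u : A -> B -> R) (v : B -> C -> R) :
  (forall a b c, Q a b c = u a b * v b c) -> markov_chain Q.
Proof.
move=> QE a b c; rewrite !QE.
under eq_bigr => a' _ do under eq_bigr => c' _ do rewrite QE.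
under [X in _ = X * _]eq_bigr => c' _ do rewrite QE.
under [X in _ = _ * X]eq_bigr => a' _ do rewrite QE.
under eq_bigr => a' _ do rewrite -big_distrr.
by rewrite -big_distrl -big_distrr -big_distrl /=; ring.
Qed.

(* One cell of [mutual_info]: joint mass w g, marginals P and w. *)
Lemma joint_mul_ln_ratio (w g P : R) : 0 <= w -> 0 <= g -> w * g <= P ->
  w * g * ln (w * g / (P * w)) = w * (g * ln g) - w * g * ln P.
Proof.
move=> w0 g0 wgP.
have [wg0|wg_neq0] := eqVneq (w * g) 0.
  rewrite wg0 !mul0r subr0.
  by move/eqP: wg0; rewrite mulf_eq0 => /orP[]/eqP->; rewrite ?mul0r ?mulr0.
have wp : 0 < w.
  by rewrite lt_neqAle eq_sym w0 andbT; apply: contraNneq wg_neq0 => ->; rewrite mul0r.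
have gp : 0 < g.
  by rewrite lt_neqAle eq_sym g0 andbT; apply: contraNneq wg_neq0 => ->; rewrite mulr0.
have Pp : 0 < P by apply: lt_le_trans wgP; rewrite mulr_gt0.
have -> : w * g / (P * w) = g / P by field; rewrite ?gt_eqF.
by rewrite ln_div ?posrE //; ring.
Qed.

Lemma mutual_info_binary (B : finType) (w q : B -> R) (f : 'I_2 -> B -> R) :
  (forall b, 0 <= w b) -> (forall b, 0 <= q b <= 1) ->
  (forall x b, f x b = w b * (if x == ord0 then q b else 1 - q b)) ->
  mutual_info f = - \sum_x (\sum_b f x b) * ln (\sum_b f x b)
                  - \sum_b w b * h2 (q b).
Proof.
move=> w_ge0 q01 fE.
have cond_ge0 (x : 'I_2) b : 0 <= (if x == ord0 then q b else 1 - q b).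
  by case: ifP => _; have := q01 b; lra.
have f_ge0 x b : 0 <= f x b by rewrite fE mulr_ge0.
have col b : \sum_(a : 'I_2) f a b = w b by rewrite sum_ord2 !fE /=; ring.
have cell_le_row x b : f x b <= \sum_b' f x b'.
  by rewrite (bigD1 b) //= lerDl sumr_ge0.
rewrite /mutual_info.
under eq_bigr => x _.
  under eq_bigr => b _.
    rewrite col fE joint_mul_ln_ratio -?fE //.
    over.
  rewrite sumrB -big_distrl /=.
  over.
rewrite /= sumrB sum_ord2 -big_split /= addrC; congr (_ + _).
rewrite -sumrN; apply: eq_bigr => b _; rewrite /h2 /=; ring.
Qed.

Section Channel.
Variables (n : nat) (i im ip : 'I_n) (alpha : R) (PY p : 'I_n -> R).
Hypotheses (im_neq_i : im != i) (ip_neq_i : ip != i) (im_neq_ip : im != ip).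

Lemma sum_PZgY (F : 'I_n -> R) (y : 'I_n) :
  \sum_(z : Zalph i) PZgY im ip alpha y z * F (val z)
  = if y != i then F y else alpha * F im + (1 - alpha) * F ip.
Proof.
rewrite /PZgY; case: (eqVneq y i) => [->|y_neq_i] /=.
  rewrite (bigD1 (exist _ im im_neq_i : Zalph i)) //=.
  rewrite (bigD1 (exist _ ip ip_neq_i : Zalph i)) /=; last first.
    by rewrite -(inj_eq val_inj) /= eq_sym.
  rewrite eqxx eq_sym (negbTE im_neq_ip) eqxx big1 ?addr0 // => z.
  by rewrite -!(inj_eq val_inj) /= => /andP[/negbTE-> /negbTE->]; rewrite mul0r.
rewrite (bigD1 (exist _ y y_neq_i : Zalph i)) //= eqxx mul1r big1 ?addr0 // => z.
by rewrite -(inj_eq val_inj) /= => /negbTE->; rewrite mul0r.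
Qed.

Definition PZ (z : Zalph i) : R := \sum_(y : 'I_n) PY y * PZgY im ip alpha y z.

Lemma sum_PZ_mul (G : 'I_n -> R) :
  \sum_(z : Zalph i) PZ z * G (val z)
  = \sum_(y : 'I_n) PY y * G y
    - PY i * (G i - alpha * G im - (1 - alpha) * G ip).
Proof.
pose mix y := if y != i then G y else alpha * G im + (1 - alpha) * G ip.
transitivity (\sum_(y : 'I_n) PY y * mix y).
  rewrite /PZ; under eq_bigr => z _ do rewrite big_distrl.
  rewrite exchange_big; apply: eq_bigr => y _ /=.
  by rewrite /mix -sum_PZgY big_distrr; apply: eq_bigr => z _; rewrite -mulrA.
have off_i : \sum_(y | y != i) PY y * mix y = \sum_(y | y != i) PY y * G y.
  by apply: eq_bigr => y; rewrite /mix => ->.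
rewrite (bigD1 i) // [in RHS](bigD1 i) //= off_i /mix eqxx /=; ring.
Qed.

Lemma PiYZX_marginal_XZ (z : Zalph i) (x : 'I_2) :
  \sum_(y : 'I_n) PiYZX PY im ip alpha p y z x = PZ z * PXgZ p x z.
Proof. by rewrite /PZ big_distrl. Qed.

Lemma PiYZX_markov :
  markov_chain (fun (x : 'I_2) (z : Zalph i) (y : 'I_n) =>
                  PiYZX PY im ip alpha p y z x).
Proof.
apply: (@markov_chain_factor _ _ _ _ (fun x z => PXgZ p x z)
          (fun z y => PY y * PZgY im ip alpha y z)) => x z y.
by rewrite /PiYZX mulrC.
Qed.

Hypothesis p_i_mix : alpha * p im + (1 - alpha) * p ip = p i.

Lemma PiYZX_marginal_XY (y : 'I_n) (x : 'I_2) :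
  \sum_(z : Zalph i) PiYZX PY im ip alpha p y z x
  = PY y * (if x == ord0 then p y else 1 - p y).
Proof.
under eq_bigr => z _ do rewrite /PiYZX /PXgZ -mulrA.
rewrite -big_distrr (sum_PZgY (fun v => if x == ord0 then p v else 1 - p v)).
case: eqVneq => [->|] //=; rewrite -p_i_mix; case: ifP => _; ring.
Qed.

End Channel.
End Proposition1.

Theorem proposition1 (R : realType) (n : nat) (pXY : 'I_2 -> 'I_n -> R)
    (p : 'I_n -> R) (i im ip : 'I_n) (alpha : R) :
  (forall x y, 0 <= pXY x y) ->
  \sum_(x : 'I_2) \sum_(y : 'I_n) pXY x y = 1 ->
  (* p_y = P(X = 0 | Y = y) (arbitrary in [0,1] when P_Y(y) = 0) *)
  (forall y, 0 <= p y <= 1) ->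
  (forall y, pXY ord0 y = p y * \sum_(x : 'I_2) pXY x y) ->
  (forall y y' : 'I_n, (y <= y')%N -> p y <= p y') ->
  (* i in {2,...,|Y|-1} (1-based), im = i-1, ip = i+1 *)
  (im + 1 = i)%N -> (i + 1 = ip)%N ->
  0 <= alpha <= 1 ->
  alpha * p im + (1 - alpha) * p ip = p i ->
  let PY := fun y => \sum_(x : 'I_2) pXY x y in
  let Q := PiYZX PY im ip alpha p in
  [/\ markov_chain (fun (x : 'I_2) (z : Zalph i) (y : 'I_n) => Q y z x),
      (forall x y, \sum_(z : Zalph i) Q y z x = pXY x y) &
      mutual_info (fun (x : 'I_2) (z : Zalph i) => \sum_(y : 'I_n) Q y z x)
        - mutual_info pXY
      = PY i * (h2 (alpha * p im + (1 - alpha) * p ip)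
                - alpha * h2 (p im) - (1 - alpha) * h2 (p ip))].
Proof.
move=> pXY_ge0 _ p01 pXY0E _ im_succ ip_succ alpha01 p_i_mix PY Q.
have im_neq_i : im != i by apply/eqP => e; rewrite e in im_succ; lia.
have ip_neq_i : ip != i by apply/eqP => e; rewrite e in ip_succ; lia.
have im_neq_ip : im != ip by apply/eqP => e; rewrite e in im_succ; lia.
have PY_ge0 y : 0 <= PY y by apply: sumr_ge0.
have pXYE x y : pXY x y = PY y * (if x == ord0 then p y else 1 - p y).
  have := pXY0E y; rewrite /PY !sum_ord2.
  have [->|->] : x = ord0 \/ x = ord_max.
    by case: x => [[|[|//]] ?]; [left | right]; apply: val_inj.
  - by move=> /= e; rewrite {1}e mulrC.
  - by move=> /= e; rewrite mulrBr mulr1 mulrC -e addrC addKr.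
have marginal_XY x y : \sum_(z : Zalph i) Q y z x = pXY x y.
  by rewrite PiYZX_marginal_XY // pXYE.
have marginal_X x : \sum_z \sum_y Q y z x = \sum_y pXY x y.
  by rewrite exchange_big; apply: eq_bigr => y _; exact: marginal_XY.
split; [exact: PiYZX_markov | exact: marginal_XY |].
rewrite (mutual_info_binary (w := PZ im ip alpha PY) (q := p \o val)); first last.
- by move=> x z; rewrite PiYZX_marginal_XZ.
- by move=> z; exact: p01.
- by move=> z; apply: sumr_ge0 => y _; rewrite mulr_ge0 // /PZgY; repeat case: ifP; lra.
rewrite (mutual_info_binary (w := PY) (q := p)) //.
under eq_bigr => x _ do rewrite marginal_X.
rewrite (sum_PZ_mul _ _ _ _ _ (fun y => h2 (p y))) //= p_i_mix; ring.
Qed.
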